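(* The relation $\le$ on $\mathcal{F}_{\mathrm{ord}}(n)$ is a partial order, and its covering relation is exactly $\lessdot$ (that is, $F'$ is covered by $F$ if and only if $F'$ is obtained from $F$ by operating on one non-leaf vertex of $F$).
   Context: An ordered forest is a finite forest of rooted trees in which the children of each vertex are linearly ordered (left to right) and the trees are linearly ordered (left to right); $\mathcal{F}_{\mathrm{ord}}(n)$ is the set of ordered forests on $n$ vertices up to isomorphism preserving roots, edge orientations and all orderings. Vertices are labeled $1,\dots,n$ by (left-to-right) preorder traversal: trees are traversed left to right, and within a tree each vertex is labeled before its subtrees, which are traversed left to right. Operation on a vertex $v$ of $F$: if $v$ is a leaf, $F$ is unchanged; otherwise let $v'$ be the rightmost child of $v$; delete the edge $v\to v'$, and if $v$ has a parent $w$, attach $v'$ (with its subtree) as a child of $w$ placed immediately to the right of $v$, while if $v$ is a root, the subtree of $v'$ becomes a new tree placed immediately to the right of the tree containing $v$. Define $F'\lessdot F$ if $F'$ is obtained from $F$ by operating on one non-leaf vertex, and $F'\le F$ if there is a sequence $F'=F_1,\dots,F_k=F$ ($k\ge1$) in $\mathcal{F}_{\mathrm{ord}}(n)$ with $F_i\lessdot F_{i+1}$ for all $i$. *)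

From Stdlib Require Import Relation_Operators.
From mathcomp Require Import all_boot.
Set Implicit Arguments. Unset Strict Implicit. Unset Printing Implicit Defensive.

(* An ordered tree is a root together with a (left-to-right) ordered forest of
   subtrees; an ordered forest is a (left-to-right) list of ordered trees.
   Structural equality of these terms is exactly isomorphism preserving roots,
   edge orientations and all orderings. *)
Inductive otree : Type := Node of oforest
with oforest : Type := FNil | FCons of otree & oforest.

Fixpoint fsize (f : oforest) : nat :=
  match f with
  | FNil => 0
  | FCons (Node ch) rest => (fsize ch).+1 + fsize rest
  end.

Fixpoint flength (f : oforest) : nat :=
  match f with FNil => 0 | FCons _ rest => (flength rest).+1 end.

Fixpoint split_last (f : oforest) : option (oforest * otree) :=
  match f with
  | FNil => None
  | FCons t rest =>
      match split_last rest with
      | None => Some (FNil, t)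
      | Some (r', l) => Some (FCons t r', l)
      end
  end.

(* Number of children of the vertex with 0-based preorder index k in the
   forest f (0 if k is out of range). *)
Fixpoint nchildren (k : nat) (f : oforest) : nat :=
  match f with
  | FNil => 0
  | FCons (Node ch) rest =>
      if k == 0 then flength ch
      else if k.-1 < fsize ch then nchildren k.-1 ch
      else nchildren (k - (fsize ch).+1) rest
  end.

(* Operation on the vertex v with 0-based preorder index k of the sibling list
   f: if v is a leaf nothing changes; otherwise its rightmost child v' (with
   its subtree) is detached and inserted into the same sibling list as v (the
   children of v's parent w, or the list of trees if v is a root),
   immediately to the right of v. *)
Fixpoint op_list (k : nat) (f : oforest) : oforest :=
  match f with
  | FNil => FNil
  | FCons (Node ch) rest =>
      if k == 0 then
        match split_last ch with
        | None => f
        | Some (ch', c) => FCons (Node ch') (FCons c rest)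
        end
      else if k.-1 < fsize ch then FCons (Node (op_list k.-1 ch)) rest
      else FCons (Node ch) (op_list (k - (fsize ch).+1) rest)
  end.

(* Vertices are labelled 1..n by (left-to-right) preorder. *)
Definition is_leaf (F : oforest) (v : nat) : bool := nchildren v.-1 F == 0.
Definition op_vertex (F : oforest) (v : nat) : oforest := op_list v.-1 F.

Definition lessdot (n : nat) (F' F : oforest) : Prop :=
  fsize F = n /\ fsize F' = n /\
  exists v, [/\ 1 <= v <= n, ~~ is_leaf F v & F' = op_vertex F v].

Definition ord_le (n : nat) (F' F : oforest) : Prop :=
  fsize F' = n /\ fsize F = n /\ clos_refl_trans oforest (lessdot n) F' F.

Definition ord_covers (n : nat) (F' F : oforest) : Prop :=
  [/\ ord_le n F' F, F' <> F &
      forall G, ord_le n F' G -> ord_le n G F -> G = F' \/ G = F].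

From Stdlib Require Import Relation_Operators Operators_Properties.
From mathcomp Require Import all_boot zify.
Set Implicit Arguments. Unset Strict Implicit. Unset Printing Implicit Defensive.

(* A forest is determined by the preorder sequence s of its subtree sizes, in
   which the subtree of the vertex at position i occupies the positions
   [i, i + s_i); these intervals are nested or disjoint.  Operating on a vertex
   at position i with rightmost child subtree of size m lowers s_i from d + m
   to d and changes nothing else, so F' <= F implies s(F') <= s(F) pointwise,
   which makes <= antisymmetric.  If F' is obtained from F this way and
   F' <= G <= F, then s(G) differs from s(F) at most at i, with
   d <= s(G)_i <= d + m; since the interval of the child at position i + d,
   of length m, must nest in or avoid the interval of position i, s(G)_i is d
   or d + m, so G is F' or F. *)

Definition seq_le (s t : seq nat) : Prop := forall i, nth 0 s i <= nth 0 t i.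

Lemma seq_le_trans s t u : seq_le s t -> seq_le t u -> seq_le s u.
Proof. by move=> st tu i; apply: leq_trans (st i) (tu i). Qed.

Lemma seq_le_anti s t : size s = size t -> seq_le s t -> seq_le t s -> s = t.
Proof.
move=> eq_size st ts; apply: (eq_from_nth (x0 := 0)) => // i _.
by apply/eqP; rewrite eqn_leq st ts.
Qed.

Definition laminar (s : seq nat) : Prop :=
  forall i j, i < j < i + nth 0 s i -> j + nth 0 s j <= i + nth 0 s i.

Lemma set_nth_nth_id T (x0 : T) s i : i < size s -> set_nth x0 s i (nth x0 s i) = s.
Proof.
move=> lt_i; apply: (eq_from_nth (x0 := x0)) => [|k _].
  by rewrite size_set_nth; apply/maxn_idPr.
by rewrite nth_set_nth /=; case: eqP => [->|].
Qed.

Lemma set_nth_cat_size T (x0 : T) s1 s2 x y :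
  set_nth x0 (s1 ++ x :: s2) (size s1) y = s1 ++ y :: s2.
Proof. by elim: s1 => //= a s1 ->. Qed.

Lemma seq_le_set_nth s i d : d <= nth 0 s i -> seq_le (set_nth 0 s i d) s.
Proof. by move=> le_d k; rewrite nth_set_nth /=; case: eqP => [->|]. Qed.

Lemma set_nth_neq T (x0 : T) s i y : y <> nth x0 s i -> set_nth x0 s i y <> s.
Proof. by move=> neq_y /(congr1 (nth x0 ^~ i)); rewrite nth_set_nth /= eqxx. Qed.

Lemma seq_le_set_nth_squeeze s t i d : i < size s -> size t = size s ->
  seq_le (set_nth 0 s i d) t -> seq_le t s -> t = set_nth 0 s i (nth 0 t i).
Proof.
move=> lt_i eq_size lo hi; apply: (eq_from_nth (x0 := 0)) => [|k _].
  by rewrite size_set_nth eq_size; apply/esym/maxn_idPr.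
rewrite nth_set_nth /=; case: eqP => [->|/eqP ne_k] //.
have := lo k; have := hi k; rewrite nth_set_nth /= (negbTE ne_k); lia.
Qed.

Lemma laminar_between_set_nth s t i d m : 0 < d ->
  nth 0 s i = d + m -> nth 0 s (i + d) = m -> laminar t -> size t = size s ->
  seq_le (set_nth 0 s i d) t -> seq_le t s -> t = set_nth 0 s i d \/ t = s.
Proof.
move=> d_gt0 s_i s_id lam_t eq_size lo hi.
have lt_i : i < size s by rewrite ltnNge; apply: contraTN d_gt0 => /(nth_default 0); lia.
have tE := seq_le_set_nth_squeeze lt_i eq_size lo hi.
have t_id : nth 0 t (i + d) = m.
  by rewrite tE nth_set_nth /= (_ : (i + d == i) = false) //; lia.
have := lo i; have := hi i; rewrite nth_set_nth /= eqxx s_i => t_i_le d_le.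
have := lam_t i (i + d); rewrite t_id.
case: (ltnP d (nth 0 t i)) => [lt_d|le_d] lam.
- right; rewrite tE -[in RHS](set_nth_nth_id 0 lt_i) s_i; congr set_nth; lia.
- by left; rewrite tE; congr set_nth; lia.
Qed.

Definition oforest_node_ind (P : oforest -> Prop) (P_nil : P FNil)
  (P_cons : forall ch rest, P ch -> P rest -> P (FCons (Node ch) rest)) :
  forall f, P f :=
  fix IH f := match f with
  | FNil => P_nil
  | FCons (Node ch) rest => P_cons ch rest (IH ch) (IH rest)
  end.

Fixpoint subtree_sizes (f : oforest) : seq nat :=
  match f with
  | FNil => [::]
  | FCons (Node ch) rest => (fsize ch).+1 :: subtree_sizes ch ++ subtree_sizes rest
  end.

Lemma size_subtree_sizes f : size (subtree_sizes f) = fsize f.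
Proof. by elim/oforest_node_ind: f => //= ch rest IHch IHrest; rewrite size_cat IHch IHrest. Qed.

Lemma subtree_sizes_inj : injective subtree_sizes.
Proof.
elim/oforest_node_ind => [|ch rest IHch IHrest] [|[ch'] rest'] //= [eq_size].
move/eqP; rewrite eqseq_cat ?size_subtree_sizes ?eq_size //.
by case/andP => /eqP /IHch -> /eqP /IHrest ->.
Qed.

Lemma subtree_sizes_bound f i : i < fsize f ->
  i + nth 0 (subtree_sizes f) i <= fsize f.
Proof.
elim/oforest_node_ind: f i => [|ch rest IHch IHrest] [|i] //=; first lia.
rewrite nth_cat size_subtree_sizes; case: ifP => [/IHch|/negbT ge_i lt_i]; first lia.
have /IHrest : i - fsize ch < fsize rest by lia.
lia.
Qed.

Lemma subtree_sizes_laminar f : laminar (subtree_sizes f).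
Proof.
elim/oforest_node_ind: f => [|ch rest IHch IHrest] i j /=.
  by rewrite !nth_nil; lia.
case: i => [|i]; case: j => [|j] //=; rewrite !nth_cat !size_subtree_sizes => ij.
- have lt_j : j < fsize ch by lia.
  by rewrite lt_j; have := subtree_sizes_bound lt_j; lia.
- have [lt_i|ge_i] := ltnP i (fsize ch).
  + rewrite lt_i in ij *.
    have lt_j : j < fsize ch by have := subtree_sizes_bound lt_i; lia.
    by rewrite lt_j; have := IHch i j; lia.
  + rewrite (ltnNge i) ge_i /= in ij *.
    rewrite (_ : (j < fsize ch) = false); last lia.
    by have := IHrest (i - fsize ch) (j - fsize ch); lia.
Qed.

Lemma split_last_None f : split_last f = None -> f = FNil.
Proof. by case: f => //= t r; case: (split_last r) => [[]|]. Qed.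

Lemma subtree_sizes_split_last f f' c : split_last f = Some (f', c) ->
  subtree_sizes f = subtree_sizes f' ++ subtree_sizes (FCons c FNil).
Proof.
elim: f f' c => //= t r IH f' c.
case E: (split_last r) => [[r' l]|] [<- <-].
- by case: t => ch /=; rewrite (IH _ _ E) catA.
- by rewrite (split_last_None E).
Qed.

(* [l2] lists the subtree sizes of the descendants of the operated vertex that
   lie outside its rightmost child subtree, of size [m]. *)
Lemma subtree_sizes_op_list f k : 0 < nchildren k f -> exists l1 l2 l3 m,
  [/\ 0 < m, subtree_sizes f = l1 ++ (size l2 + m).+1 :: l2 ++ m :: l3 &
      subtree_sizes (op_list k f) = l1 ++ (size l2).+1 :: l2 ++ m :: l3].
Proof.
elim/oforest_node_ind: f k => [|ch rest IHch IHrest] // [|k] /=.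
- case E: (split_last ch) => [[ch' [cc]]|]; last by rewrite (split_last_None E).
  move=> _; have ch_E := subtree_sizes_split_last E.
  exists [::], (subtree_sizes ch'), (subtree_sizes cc ++ subtree_sizes rest), (fsize cc).+1.
  rewrite /= ch_E /= cats0 -catA /= size_subtree_sizes; split => //.
  have := congr1 size ch_E; rewrite size_cat /= cats0 !size_subtree_sizes => ->.
  by congr (_ :: _); lia.
- case: ifP => _.
  + move=> /IHch [l1 [l2 [l3 [m [m_gt0 ch_E op_E]]]]].
    have eq_fsize : fsize (op_list k ch) = fsize ch.
      by rewrite -!size_subtree_sizes ch_E op_E !size_cat /= !size_cat.
    exists ((fsize ch).+1 :: l1), l2, (l3 ++ subtree_sizes rest), m.
    by rewrite /= eq_fsize ch_E op_E -!catA /= -!catA.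
  + move=> /IHrest [l1 [l2 [l3 [m [m_gt0 rest_E op_E]]]]].
    exists ((fsize ch).+1 :: subtree_sizes ch ++ l1), l2, l3, m.
    by rewrite /= rest_E op_E -!catA.
Qed.

Lemma lessdot_subtree_sizes n F' F : lessdot n F' F ->
  let s := subtree_sizes F in exists i d m,
  [/\ 0 < d, 0 < m, nth 0 s i = d + m, nth 0 s (i + d) = m &
      subtree_sizes F' = set_nth 0 s i d].
Proof.
case=> _ [_ [v [_ not_leaf ->]]].
have /subtree_sizes_op_list : 0 < nchildren v.-1 F by rewrite lt0n.
case=> l1 [l2 [l3 [m [m_gt0 F_E op_E]]]].
exists (size l1), (size l2).+1, m; rewrite F_E /op_vertex op_E (set_nth_cat_size 0).
split => //; rewrite nth_cat ?ltnn ?subnn //.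
by rewrite ltnNge leq_addr /= addKn /= nth_cat ltnn subnn.
Qed.

Lemma lessdot_seq_le n F' F : lessdot n F' F ->
  seq_le (subtree_sizes F') (subtree_sizes F).
Proof.
by case/lessdot_subtree_sizes=> i [d [m [_ _ s_i _ ->]]]; apply: seq_le_set_nth; lia.
Qed.

Lemma lessdot_neq n F' F : lessdot n F' F -> F' <> F.
Proof.
case/lessdot_subtree_sizes=> i [d [m [_ m_gt0 s_i _ F'_E]]] eq_F.
by apply: (@set_nth_neq _ 0 (subtree_sizes F) i d); [rewrite s_i; lia | rewrite -F'_E eq_F].
Qed.

Lemma ord_le_seq_le n F' F : ord_le n F' F ->
  seq_le (subtree_sizes F') (subtree_sizes F).
Proof.
case=> _ [_]; elim=> [G H /lessdot_seq_le|G|G H K _ GH _ HK] //.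
exact: seq_le_trans GH HK.
Qed.

Lemma ord_le_refl n F : fsize F = n -> ord_le n F F.
Proof. by move=> size_F; do 2!split => //; apply: rt_refl. Qed.

Lemma ord_le_trans n F G H : ord_le n F G -> ord_le n G H -> ord_le n F H.
Proof. by move=> [? [_ FG]] [_ [? GH]]; do 2!split => //; apply: rt_trans FG GH. Qed.

Lemma ord_le_anti n F G : ord_le n F G -> ord_le n G F -> F = G.
Proof.
move=> FG GF; apply/subtree_sizes_inj/seq_le_anti; last exact: ord_le_seq_le GF.
- by case: FG => [size_F [size_G _]]; rewrite !size_subtree_sizes size_F size_G.
- exact: ord_le_seq_le FG.
Qed.

Lemma lessdot_ord_le n F' F : lessdot n F' F -> ord_le n F' F.
Proof. by move=> /[dup] [[? [? _]]] ?; do 2!split => //; apply: rt_step. Qed.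

Lemma ord_covers_lessdot n F' F : ord_covers n F' F -> lessdot n F' F.
Proof.
case=> [[size_F' [size_F chain]] neq_F' covers].
case: {chain}(clos_rt_rt1n _ _ _ _ chain) neq_F' covers size_F => [//|G1 K F'G1 G1K] _.
move=> covers size_K; have size_G1 : fsize G1 = n by case: F'G1.
have G1_le_K : ord_le n G1 K by do 2!split => //; apply: clos_rt1n_rt.
case: (covers G1 (lessdot_ord_le F'G1) G1_le_K) => [G1_E|<- //].
by case: (lessdot_neq F'G1).
Qed.

Lemma lessdot_ord_covers n F' F : lessdot n F' F -> ord_covers n F' F.
Proof.
move=> F'F; split; [exact: lessdot_ord_le F'F | exact: lessdot_neq F'F |].
move=> G F'G GF; have [i [d [m [d_gt0 _ s_i s_id F'_E]]]] := lessdot_subtree_sizes F'F.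
have size_G : size (subtree_sizes G) = size (subtree_sizes F).
  by case: F'G GF => _ [size_G _] [_ [size_F _]]; rewrite !size_subtree_sizes size_G size_F.
have := laminar_between_set_nth d_gt0 s_i s_id (@subtree_sizes_laminar G) size_G.
rewrite -F'_E => /(_ (ord_le_seq_le F'G) (ord_le_seq_le GF)).
by case=> /subtree_sizes_inj ->; [left | right].
Qed.

Theorem theorem4p6 (n : nat) :
  [/\ (forall F : oforest, fsize F = n -> ord_le n F F),
      (forall F G : oforest, ord_le n F G -> ord_le n G F -> F = G),
      (forall F G H : oforest, ord_le n F G -> ord_le n G H -> ord_le n F H) &
      (forall F' F : oforest, fsize F' = n -> fsize F = n ->
         (ord_covers n F' F <-> lessdot n F' F))].
Proof.
split; [exact: ord_le_refl | exact: ord_le_anti | exact: ord_le_trans |].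
by move=> F' F _ _; split; [apply: ord_covers_lessdot | apply: lessdot_ord_covers].
Qed.
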